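(* Let $m\in\frac12\mathbb{N}$ and $\sigma\in\Phi^m(SU_q(2))$ be such that $\sigma(l)=0$ for all $l>N$, for some $N\in\mathbb{N}$. Then $T_\sigma$ is of finite rank.
   Context: Fix $0<q<1$. $SU_q(2)$ is the $*$-algebra generated by $a,c$ with $ac^*=qc^*a$, $ca^*=qa^*c$, $c^*a^*=qa^*c^*$, $c^*c=cc^*$, $aa^*+q^2c^*c=a^*a+c^*c=1$, with Haar state $h$. For $l\in\frac12\mathbb{N}$, $T^l=[t^l_{ij}]_{-l\le i,j\le l}$ is the irreducible unitary matrix corepresentation of dimension $2l+1$; $\{t^l_{ij}\}$ is an orthogonal basis with $h(t^l_{ij}(t^l_{ij})^* )=[2l+1]_q^{-1}q^{2j}$, $[x]_q=\frac{q^x-q^{-x}}{q-q^{-1}}$. Fourier transform: $\hat f(l)_{mn}=h(f(t^l_{nm})^* )$. $Tr_q(M)=Tr(D_qM)$, $D_q=\mathrm{diag}(q^{-2i})_{-l\le i\le l}$. A symbol is a map $\sigma:\frac12\mathbb{N}\to\bigcup_lM_{2l+1}(\mathbb{C})\otimes SU_q(2)$, with operator $T_\sigma f=\sum_l[2l+1]_qTr_q(\sigma(l)\hat f(l)T^l)$. With $I_{2l+1}=\{-l,\dots,l\}$: $\sigma$ is homogeneous of Fourier order $m\in\frac12\mathbb{N}$ if for each $l$ there is $\psi_\sigma(l):I_{2l+1}^2\to I_{2l+1}^2$ with $\sigma(l)_{ij}\in\mathrm{Span}\{t^m_{\psi_\sigma(l)(i,j)}\}$ and $\sigma(l)_{ij}=0$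 when $\psi_\sigma(l)(i,j)\notin I_{2m+1}^2$; $\Phi^m(SU_q(2))$ consists of finite linear combinations of such symbols. *)

From HB Require Import structures.
From mathcomp Require Import all_boot all_order all_algebra.
From Stdlib Require Import ClassicalEpsilon.
Set Implicit Arguments. Unset Strict Implicit. Unset Printing Implicit Defensive.
Import Order.TTheory GRing.Theory Num.Theory.
Local Open Scope ring_scope.

(* Conventions.
   - A spin l in (1/2)N is encoded by n = 2l : nat.
   - A half-integer index i in I_{2l+1} = {-l,...,l} is encoded by the
     integer x = 2i; so I_{2l+1} corresponds to
     {x : int | |x| <= n and x = n mod 2}.
   - The element a : 'I_n.+1 encodes the doubled index  2a - n.
   - t n x y stands for t^{n/2}_{x/2, y/2}; a symbol sigma is encoded by
     sigma n x y = sigma(n/2)_{x/2, y/2}. *)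

Definition inI (n : nat) (x : int) : bool :=
  (absz x <= n)%N && (odd (absz x) == odd n).

Definition idx (n : nat) (a : 'I_n.+1) : int := (2 * a)%:Z - n%:Z.

Section Defs.
Variable C : numClosedFieldType.

Definition qint (q : C) (x : int) : C := (q ^ x - q ^ (- x)) / (q - q^-1).

(* The data of SU_q(2): a complex *-algebra A with generators a, c,
   Haar state h and the matrix coefficients t of the irreducible unitary
   corepresentations. *)
Record SUq2 (q : C) (A : algType C) (a c : A) (star : A -> A) (h : A -> C)
  (t : nat -> int -> int -> A) : Prop := {
  star_add : forall x y, star (x + y) = star x + star y;
  star_scale : forall (k : C) x, star (k *: x) = k^* *: star x;
  star_mul : forall x y, star (x * y) = star y * star x;
  star_inv : forall x, star (star x) = x;
  rel1 : a * star c = q *: (star c * a);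
  rel2 : c * star a = q *: (star a * c);
  rel3 : star c * star a = q *: (star a * star c);
  rel4 : star c * c = c * star c;
  rel5 : a * star a + q ^+ 2 *: (star c * c) = 1;
  rel6 : star a * a + star c * c = 1;
  h_linear : forall (k : C) x y, h (k *: x + y) = k * h x + h y;
  h_unit : h 1 = 1;
  h_pos : forall x, 0 <= h (x * star x);
  t_span : forall f : A, exists N (k : nat -> int -> int -> C),
      f = \sum_(n < N) \sum_(i < n.+1) \sum_(j < n.+1)
            k n (@idx n i) (@idx n j) *: t n (@idx n i) (@idx n j);
  t_orth : forall n x y n' x' y', inI n x -> inI n y -> inI n' x' -> inI n' y' ->
      h (t n x y * star (t n' x' y')) =
      if [&& n == n', x == x' & y == y'] then (qint q (n.+1)%:Z)^-1 * q ^ y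
      else 0
}.

Variables (q : C) (A : algType C) (star : A -> A) (h : A -> C)
  (t : nat -> int -> int -> A).

Definition fhat (f : A) (n : nat) (x y : int) : C := h (f * star (t n y x)).

(* [2l+1]_q Tr_q(sigma(l) fhat(l) T^l), with D_q = diag(q^{-2i}) *)
Definition Tterm (sigma : nat -> int -> int -> A) (f : A) (n : nat) : A :=
  qint q (n.+1)%:Z *:
  \sum_(i < n.+1) \sum_(j < n.+1) \sum_(k < n.+1)
     (q ^ (- @idx n i) * fhat f n (@idx n j) (@idx n k)) *:
       (sigma n (@idx n i) (@idx n j) * t n (@idx n k) (@idx n i)).

Definition Tpartial (sigma : nat -> int -> int -> A) (f : A) (N : nat) : A :=
  \sum_(n < N) Tterm sigma f n.

(* T_sigma f = sum over all l; the sum is finite for each f (the partial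
   sums are eventually constant) and T_sigma f is its value. *)
Definition eventually_equal (u : nat -> A) (g : A) : Prop :=
  exists N0, forall N, (N0 <= N)%N -> u N = g.

Definition Top (sigma : nat -> int -> int -> A) (f : A) : A :=
  epsilon (inhabits 0) (eventually_equal (Tpartial sigma f)).

Definition homogeneous (M : nat) (sigma : nat -> int -> int -> A) : Prop :=
  forall n, exists psi : int -> int -> int * int,
    (forall x y, inI n x -> inI n y -> inI n (psi x y).1 && inI n (psi x y).2) /\
    (forall x y, inI n x -> inI n y ->
       if inI M (psi x y).1 && inI M (psi x y).2 then
         exists k : C, sigma n x y = k *: t M (psi x y).1 (psi x y).2
       else sigma n x y = 0).

Definition inPhi (M : nat) (sigma : nat -> int -> int -> A) : Prop :=
  exists K (s : 'I_K -> nat -> int -> int -> A) (k : 'I_K -> C),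
    (forall r, homogeneous M (s r)) /\
    (forall n x y, inI n x -> inI n y ->
       sigma n x y = \sum_(r < K) k r *: s r n x y).

Definition finite_rank (T : A -> A) : Prop :=
  exists K (b : 'I_K -> A), forall f, exists k : 'I_K -> C,
    T f = \sum_(r < K) k r *: b r.

End Defs.

From HB Require Import structures.
From mathcomp Require Import all_boot all_order all_algebra.
From Stdlib Require Import ClassicalEpsilon.
From mathcomp Require Import zify.
Set Implicit Arguments. Unset Strict Implicit. Unset Printing Implicit Defensive.
Import Order.TTheory GRing.Theory Num.Theory.
Local Open Scope ring_scope.

(* If σ(l) = 0 for l > N, the series defining T_σ f stops at l = N, and the
   l-th term [2l+1]_q Tr_q(σ(l) f̂(l) T^l) is a linear combination of the
   finitely many fixed elements σ(l)_ij t^l_ki, with coefficients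
   q^(-2i) h(f (t^l_kj)^* ) depending on f.  Hence the range of T_σ lies in
   their span. *)

Section FiniteSpanRange.
Variables (R : pzRingType) (U V : lmodType R).

Definition finite_span_range (T : U -> V) : Prop :=
  exists (I : finType) (b : I -> V), forall f, exists k : I -> R,
    T f = \sum_(i : I) k i *: b i.

Lemma eq_finite_span_range (T1 T2 : U -> V) :
  finite_span_range T1 -> T1 =1 T2 -> finite_span_range T2.
Proof.
move=> [I [b spanT1]] eqT; exists I, b => f.
by have [k def_T1f] := spanT1 f; exists k; rewrite -eqT.
Qed.

Lemma finite_span_range0 : finite_span_range (fun _ => 0).
Proof.
exists unit, (fun _ => 0) => _; exists (fun _ => 0).
by rewrite big1 // => i _; rewrite scale0r.
Qed.

Lemma finite_span_range_scalel (k : U -> R) (v : V) :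
  finite_span_range (fun f => k f *: v).
Proof.
by exists unit, (fun _ => v) => f; exists (fun _ => k f); rewrite (big_pred1 tt).
Qed.

Lemma finite_span_rangeD (T1 T2 : U -> V) :
  finite_span_range T1 -> finite_span_range T2 ->
  finite_span_range (fun f => T1 f + T2 f).
Proof.
move=> [I1 [b1 span1]] [I2 [b2 span2]].
exists (I1 + I2)%type, [eta sum_rect _ b1 b2] => f.
have [k1 ->] := span1 f; have [k2 ->] := span2 f.
by exists [eta sum_rect _ k1 k2]; rewrite big_sumType.
Qed.

Lemma finite_span_rangeZ (k : R) (T : U -> V) :
  finite_span_range T -> finite_span_range (fun f => k *: T f).
Proof.
move=> [I [b spanT]]; exists I, b => f; have [k' ->] := spanT f.
exists (fun i => k * k' i); rewrite scaler_sumr.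
by apply: eq_bigr => i _; rewrite scalerA.
Qed.

Lemma finite_span_range_sum n (T : 'I_n -> U -> V) :
  (forall r, finite_span_range (T r)) ->
  finite_span_range (fun f => \sum_(r < n) T r f).
Proof.
elim: n T => [|n IHn] T spanT.
  by apply: (eq_finite_span_range finite_span_range0) => f; rewrite big_ord0.
have spanT_init := IHn (fun r => T (widen_ord (leqnSn n) r)) (fun r => spanT _).
apply: (eq_finite_span_range (finite_span_rangeD spanT_init (spanT ord_max))) => f.
by rewrite [RHS]big_ord_recr.
Qed.

End FiniteSpanRange.

Lemma finite_span_range_finite_rank (C : numClosedFieldType) (A : algType C)
    (T : A -> A) :
  finite_span_range T -> finite_rank T.
Proof.
move=> [I [b spanT]]; exists #|I|, (fun r => b (enum_val r)) => f.
have [k ->] := spanT f; exists (fun r => k (enum_val r)).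
by rewrite (big_enum_val (A := predT)).
Qed.

Lemma big_ord_vanishing_tail (V : nmodType) (u : nat -> V) B m :
  (forall n, (B <= n)%N -> u n = 0) -> (B <= m)%N ->
  \sum_(n < m) u n = \sum_(n < B) u n.
Proof.
move=> u_tail leBm; rewrite (big_ord_widen m u leBm) [RHS]big_mkcond /=.
by apply: eq_bigr => i _; case: ltnP => // /u_tail.
Qed.

Lemma inI_idx n (a : 'I_n.+1) : inI n (idx a).
Proof.
rewrite /inI /idx; have lt_a_n1 := ltn_ord a.
case: (leqP n (2 * a)) => le_n_2a.
  rewrite subzn // absz_nat oddB // oddM /=.
  by apply/andP; split => //; lia.
rewrite -opprB subzn ?(ltnW le_n_2a) // abszN absz_nat oddB ?(ltnW le_n_2a) //.
by rewrite oddM /= addbF; apply/andP; split => //; lia.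
Qed.

Section SymbolOperator.
Variables (C : numClosedFieldType) (q : C) (A : algType C).
Variables (star : A -> A) (h : A -> C) (t : nat -> int -> int -> A).
Variable sigma : nat -> int -> int -> A.

Local Notation Tterm := (Tterm q star h t sigma).
Local Notation Tpartial := (Tpartial q star h t sigma).
Local Notation Top := (Top q star h t sigma).

Lemma Tterm_eq0 f n :
  (forall x y, inI n x -> inI n y -> sigma n x y = 0) -> Tterm f n = 0.
Proof.
move=> sigma_n0; rewrite /Tterm big1 ?scaler0 // => i _.
rewrite big1 // => j _; rewrite big1 // => k _.
by rewrite sigma_n0 ?inI_idx // mul0r scaler0.
Qed.

Lemma Top_eq f g : eventually_equal (Tpartial f) g -> Top f = g.
Proof.
move=> ev_g; have [N1 eq_Top] := epsilon_spec (inhabits 0) _ (ex_intro _ g ev_g).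
case: ev_g => N0 eq_g.
by rewrite -(eq_g (N0 + N1)%N) ?leq_addr // eq_Top ?leq_addl.
Qed.

Lemma Top_truncated B f :
  (forall n, (B <= n)%N -> Tterm f n = 0) -> Top f = Tpartial f B.
Proof.
move=> Tterm_tail; apply: Top_eq; exists B => m leBm.
exact: big_ord_vanishing_tail.
Qed.

Lemma finite_span_range_Tterm n : finite_span_range (Tterm^~ n).
Proof.
apply: finite_span_rangeZ; apply: finite_span_range_sum => i.
apply: finite_span_range_sum => j; apply: finite_span_range_sum => k.
exact: finite_span_range_scalel.
Qed.

End SymbolOperator.

Theorem mainTheorem7 (C : numClosedFieldType) (q : C) (A : algType C)
  (a c : A) (star : A -> A) (h : A -> C) (t : nat -> int -> int -> A)
  (hq0 : 0 < q) (hq1 : q < 1)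
  (HS : SUq2 q a c star h t)
  (M : nat) (sigma : nat -> int -> int -> A)
  (Hsigma : inPhi t M sigma)
  (N : nat)
  (Hvanish : forall n, (2 * N < n)%N -> forall x y, inI n x -> inI n y ->
                sigma n x y = 0) :
  finite_rank (Top q star h t sigma).
Proof.
apply: finite_span_range_finite_rank.
have Top_partial f : Top q star h t sigma f = Tpartial q star h t sigma f (2 * N).+1.
  by apply: Top_truncated => n ltNn; apply: Tterm_eq0; apply: Hvanish.
have span_Tpartial := finite_span_range_sum (n := (2 * N).+1)
  (fun n => finite_span_range_Tterm q star h t sigma n).
by apply: (eq_finite_span_range span_Tpartial) => f; rewrite Top_partial.
Qed.
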